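(* Let $p\equiv1\pmod4$ be a prime power and $q=\frac12(p+1)$. Then there exist four mutually quasi-unbiased weighing matrices for the parameters $(16q,16q,16,16q^2)$.
   Context: A weighing matrix of order $n$ and weight $k$ is an $n\times n$ $(0,1,-1)$-matrix $W$ with $WW^\top=kI_n$. Weighing matrices $W_1,W_2$ of order $n$ and weight $k$ are quasi-unbiased for parameters $(n,k,l,a)$ if $\frac1{\sqrt a}W_1W_2^\top$ is a weighing matrix of order $n$ and weight $l$; mutually quasi-unbiased means pairwise. *)

From HB Require Import structures.
From mathcomp Require Import all_boot all_order all_algebra all_field.
Set Implicit Arguments. Unset Strict Implicit. Unset Printing Implicit Defensive.
Import Order.TTheory GRing.Theory Num.Theory.
Local Open Scope ring_scope.

(* Matrices are taken over algC (algebraic complex numbers), which contains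
   the (0,1,-1) entries and square roots (sqrtC) needed for 1/sqrt(a). *)

Definition weighing_matrix (n k : nat) (W : 'M[algC]_n) : Prop :=
  (forall i j, W i j \in [:: 0; 1; -1]) /\ W *m W^T = (k%:R)%:M.
Arguments weighing_matrix : clear implicits.

Definition quasi_unbiased (n k l a : nat) (W1 W2 : 'M[algC]_n) : Prop :=
  [/\ weighing_matrix n k W1, weighing_matrix n k W2 &
      weighing_matrix n l ((sqrtC (a%:R))^-1 *: (W1 *m W2^T))].
Arguments quasi_unbiased : clear implicits.

Definition mutually_quasi_unbiased (m n k l a : nat) (W : 'I_m -> 'M[algC]_n) : Prop :=
  (forall i, weighing_matrix n k (W i)) /\
  (forall i j, i != j -> quasi_unbiased n k l a (W i) (W j)).
Arguments mutually_quasi_unbiased : clear implicits.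

Definition prime_power (p : nat) : Prop :=
  exists r e, prime r /\ (0 < e)%N /\ p = (r ^ e)%N.

From mathcomp Require Import all_boot all_order all_algebra all_field.
From mathcomp Require Import mxtens ring zify.
Set Implicit Arguments. Unset Strict Implicit. Unset Printing Implicit Defensive.
Import GRing.Theory Num.Theory.
Local Open Scope ring_scope.

(* Hadamard matrices h of order 4 and H of order n = 4q (Paley's
   second construction, from the quadratic character of a field of order
   p = 1 mod 4) are combined through the additive group of GF(4), which acts
   freely on the rows of H by translation of the first coordinate of
   GF(4) x [0, q).  For i in GF(4) put
     W_i[(a, X), (b, Y)] = h[a, b] H[i b + X, Y].
   Then W_i W_j^T[(a, X), (c, Y)] = n sum_b h[a, b] h[c, b] [(i - j) b + X = Y].
   For i = j this is 4n [(a, X) = (c, Y)], so every W_i is Hadamard.  For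
   i <> j the action is free and b |-> (i - j) b is injective, so at most one b
   contributes and W_i W_j^T / n is a (0, 1, -1)-matrix, of weight
   (4n)^2 / n^2 = 16 because W_i and W_j are Hadamard. *)

Local Notation trits := ([:: 0; 1; -1] : seq algC).
Local Notation ix := mxtens_index.
Local Notation unix := mxtens_unindex.

Lemma trits_sign (b : bool) : (-1) ^+ b \in trits.
Proof. by case: b; rewrite !inE eqxx ?orbT. Qed.

Lemma tritsM x y : x \in trits -> y \in trits -> x * y \in trits.
Proof.
by rewrite !inE => /or3P[] /eqP-> /or3P[] /eqP->;
  rewrite ?mul0r ?mulr0 ?mul1r ?mulr1 ?mulrNN ?mulr1 ?eqxx ?orbT.
Qed.

Lemma sumr_pick_trit (I : finType) (f : I -> algC) (P : pred I) :
  (forall b, f b \in trits) -> (forall b1 b2, P b1 -> P b2 -> b1 = b2) ->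
  \sum_b f b * (P b)%:R \in trits.
Proof.
move=> f_trit P_uniq; case: (pickP P) => [b0 Pb0 | noP].
  rewrite (bigD1 b0) //= Pb0 mulr1 big1 ?addr0 // => b b_neq.
  have /negbTE-> : ~~ P b by apply: contra b_neq => Pb; rewrite (P_uniq _ _ Pb Pb0).
  by rewrite mulr0.
by rewrite big1 ?inE ?eqxx // => b _; rewrite noP mulr0.
Qed.

Lemma sqrtC_natM (n : nat) : sqrtC (n * n)%:R = n%:R :> algC.
Proof. by rewrite natrM -expr2 sqrCK ?ler0n. Qed.

Lemma sum_mxtens_index (V : nmodType) m n (f : 'I_(m * n) -> V) :
  \sum_(I < m * n) f I = \sum_(i < m) \sum_(j < n) f (ix (i, j)).
Proof.
rewrite pair_big /= (reindex (@mxtens_index m n)) /=; first by apply: eq_bigr => -[].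
by exists (@mxtens_unindex m n) => I _; [exact: mxtens_indexK | exact: mxtens_unindexK].
Qed.

Lemma eq_mxtens_index m n (ij kl : 'I_m * 'I_n) : (ix ij == ix kl) = (ij == kl).
Proof. exact: (can_eq (@mxtens_indexK m n)). Qed.

Lemma tensmxDr m n p r (A : 'M[algC]_(m, n)) (B C : 'M[algC]_(p, r)) :
  A *t (B + C) = A *t B + A *t C.
Proof. by apply/matrixP => i j; rewrite !mxE mulrDr. Qed.

Lemma tensmx_scalar m n (a b : algC) : (a%:M : 'M_m) *t (b%:M : 'M_n) = (a * b)%:M.
Proof.
apply/matrixP => i j.
case: (mxtens_indexP i) => i1 i2; case: (mxtens_indexP j) => j1 j2.
rewrite tensmxE !mxE eq_mxtens_index xpair_eqE.
by case: (i1 == j1); case: (i2 == j2); rewrite ?mulr1n ?mulr0n ?mulr0 ?mul0r.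
Qed.

Lemma weighing_matrix_tr n k (W : 'M[algC]_n) : (0 < k)%N ->
  weighing_matrix n k W -> weighing_matrix n k W^T.
Proof.
move=> k_gt0 [W_trit WWt]; split=> [i j|]; first by rewrite mxE.
have k_neq0 : (k%:R : algC) != 0 by rewrite pnatr_eq0 -lt0n.
have : (k%:R^-1 *: W) *m W^T = 1%:M by rewrite -scalemxAl WWt scale_scalar_mx mulVf.
move/mulmx1C; rewrite trmxK -scalemxAr => /(congr1 (fun M => k%:R *: M)).
by rewrite scalerA mulfV // scale1r => ->; rewrite scalemx1.
Qed.

Lemma weighing_matrix_mul_tr n k (W V : 'M[algC]_n) : (0 < k)%N ->
  weighing_matrix n k W -> weighing_matrix n k V ->
  (W *m V^T) *m (W *m V^T)^T = (k%:R ^+ 2)%:M.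
Proof.
move=> k_gt0 [_ WWt] /(weighing_matrix_tr k_gt0) [_ VtV].
rewrite trmx_mul trmxK in VtV *.
rewrite mulmxA -(mulmxA W) VtV.
by rewrite mul_mx_scalar -scalemxAl WWt scale_scalar_mx expr2.
Qed.

Lemma weighing_matrix_tensmx m n k l (A : 'M[algC]_m) (B : 'M[algC]_n) :
  weighing_matrix m k A -> weighing_matrix n l B ->
  weighing_matrix (m * n) (k * l) (A *t B).
Proof.
move=> [A_trit AAt] [B_trit BBt]; split=> [I J|].
  by rewrite mxE tritsM.
by rewrite trmx_tens tensmx_mul AAt BBt tensmx_scalar natrM.
Qed.

Section QuasiUnbiasedFamily.

Variables (K : zmodType) (k m n : nat).
Variable act : K -> 'I_n -> 'I_n.
Hypothesis act0 : forall X, act 0 X = X.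
Hypothesis actD : forall s t X, act s (act t X) = act (s + t) X.
Hypothesis act_free : forall t X, act t X = X -> t = 0.
Variable d : 'I_k -> 'I_m -> K.
Hypothesis d_diff_inj : forall i j, i != j -> injective (fun b => d i b - d j b).
Variables (h : 'M[algC]_m) (H : 'M[algC]_n).
Hypotheses (h_hadamard : weighing_matrix m m h) (H_hadamard : weighing_matrix n n H).
Hypotheses (m_gt0 : (0 < m)%N) (n_gt0 : (0 < n)%N).

Definition qu_family (i : 'I_k) : 'M[algC]_(m * n) :=
  \matrix_(I, J) (h (unix I).1 (unix J).1 * H (act (d i (unix J).1) (unix I).2) (unix J).2).

Lemma actK t : cancel (act t) (act (- t)).
Proof. by move=> X; rewrite actD addNr act0. Qed.

Lemma act_eq s t X Y : (act s X == act t Y) = (act (s - t) X == Y).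
Proof. by rewrite -(inj_eq (can_inj (actK (- t)))) actK actD addrC. Qed.

Lemma qu_family_mul_tr i j a c X Y :
  (qu_family i *m (qu_family j)^T) (ix (a, X)) (ix (c, Y)) =
  n%:R * \sum_b h a b * h c b * (act (d i b - d j b) X == Y)%:R.
Proof.
case: H_hadamard => _ HHt.
rewrite mxE sum_mxtens_index mulr_sumr; apply: eq_bigr => b _.
transitivity (h a b * h c b * (H *m H^T) (act (d i b) X) (act (d j b) Y)).
  rewrite mxE mulr_sumr; apply: eq_bigr => Z _.
  by rewrite !mxE !mxtens_indexK mulrACA.
by rewrite HHt mxE act_eq; case: (_ == Y); rewrite ?mulr1n ?mulr0n ?mulr1 ?mulr0 // mulrC.
Qed.

Lemma qu_family_weighing i : weighing_matrix (m * n) (m * n) (qu_family i).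
Proof.
split=> [I J|].
  by case: h_hadamard => h_trit _; case: H_hadamard => H_trit _; rewrite mxE tritsM.
apply/matrixP => I J; case: (mxtens_indexP I) => a X; case: (mxtens_indexP J) => c Y.
rewrite qu_family_mul_tr; under eq_bigr do rewrite subrr act0; rewrite -mulr_suml.
have -> : \sum_b h a b * h c b = (h *m h^T) a c by rewrite mxE; apply: eq_bigr => b; rewrite mxE.
case: h_hadamard => _ ->; rewrite !mxE eq_mxtens_index xpair_eqE natrM.
by case: (a == c); case: (X == Y); rewrite /= ?mulr1n ?mulr0n ?mul0r ?mulr0 ?mulr1 // mulrC.
Qed.

Lemma qu_family_mul_tr_weighing i j : i != j ->
  weighing_matrix (m * n) (m * m) ((sqrtC (n * n)%:R)^-1 *: (qu_family i *m (qu_family j)^T)).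
Proof.
move=> ij; have n_neq0 : (n%:R : algC) != 0 by rewrite pnatr_eq0 -lt0n.
split=> [I J|].
  rewrite mxE; case: (mxtens_indexP I) => a X; case: (mxtens_indexP J) => c Y.
  rewrite qu_family_mul_tr sqrtC_natM mulKf //.
  apply: sumr_pick_trit => [b | b1 b2 /eqP e1 /eqP e2].
    by case: h_hadamard => h_trit _; rewrite tritsM.
  apply: (d_diff_inj ij); apply/eqP; rewrite -subr_eq0; apply/eqP; apply: (act_free (X := X)).
  by rewrite addrC -actD e1 -e2 actK.
rewrite linearZ /= -scalemxAl -scalemxAr scalerA.
rewrite (weighing_matrix_mul_tr _ (qu_family_weighing i) (qu_family_weighing j)) ?muln_gt0 ?m_gt0 //.
by rewrite scale_scalar_mx sqrtC_natM !natrM; congr (_%:M); field.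
Qed.

Theorem qu_family_mutually_quasi_unbiased :
  mutually_quasi_unbiased k (m * n) (m * n) (m * m) (n * n) qu_family.
Proof.
split=> [|i j ij]; first exact: qu_family_weighing.
by split; [exact: qu_family_weighing | exact: qu_family_weighing | exact: qu_family_mul_tr_weighing].
Qed.

End QuasiUnbiasedFamily.

Section TranslateFst.

Variables (K : finZmodType) (q : nat).

Definition translate_fst (t : K) (X : 'I_(#|K| * q)) : 'I_(#|K| * q) :=
  ix (enum_rank (t + enum_val (unix X).1), (unix X).2).

Lemma translate_fst_index t x s :
  translate_fst t (ix (x, s)) = ix (enum_rank (t + enum_val x), s).
Proof. by rewrite /translate_fst mxtens_indexK. Qed.

Lemma translate_fst0 X : translate_fst 0 X = X.
Proof.
by case: (mxtens_indexP X) => x s; rewrite translate_fst_index add0r enum_valK.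
Qed.

Lemma translate_fstD s t X : translate_fst s (translate_fst t X) = translate_fst (s + t) X.
Proof.
by case: (mxtens_indexP X) => x u; rewrite !translate_fst_index enum_rankK addrA.
Qed.

Lemma translate_fst_free t X : translate_fst t X = X -> t = 0.
Proof.
case: (mxtens_indexP X) => x s; rewrite translate_fst_index => /(can_inj (@mxtens_indexK _ _)) [].
by move/(congr1 enum_val); rewrite enum_rankK -[X in _ = X]add0r => /addIr.
Qed.

End TranslateFst.

Theorem finField_mutually_quasi_unbiased (F : finFieldType) q
    (h : 'M[algC]_#|F|) (H : 'M[algC]_(#|F| * q)) : (0 < q)%N ->
  weighing_matrix #|F| #|F| h -> weighing_matrix (#|F| * q) (#|F| * q) H ->
  exists W : 'I_#|F| -> 'M[algC]_(#|F| * (#|F| * q)),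
    mutually_quasi_unbiased #|F| (#|F| * (#|F| * q)) (#|F| * (#|F| * q))
      (#|F| * #|F|) ((#|F| * q) * (#|F| * q)) W.
Proof.
move=> q_gt0 h_hadamard H_hadamard.
have F_gt0 : (0 < #|F|)%N := ltnW (finNzRing_gt1 F).
pose d (i b : 'I_#|F|) := enum_val i * enum_val b.
have d_diff_inj i j : i != j -> injective (fun b => d i b - d j b).
  move=> ij; have nz : enum_val i - enum_val j != 0 by rewrite subr_eq0 (inj_eq enum_val_inj).
  by move=> b1 b2; rewrite /= /d -!mulrBl => /(mulfI nz)/enum_val_inj.
exists (qu_family (@translate_fst F q) d h H).
apply: qu_family_mutually_quasi_unbiased => //.
- exact: translate_fst0.
- exact: translate_fstD.
- exact: translate_fst_free.
- by rewrite muln_gt0 F_gt0.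
Qed.

Section QuadraticCharacter.

Variable F : finFieldType.
Hypothesis F_odd : odd #|F|.
Local Notation e := #|F|./2.

Let card_gt1 : (1 < #|F|)%N := finNzRing_gt1 F.

Lemma half_card_double : (e * 2 = #|F|.-1)%N.
Proof. by have := odd_double_half #|F|; rewrite F_odd -muln2; lia. Qed.

Lemma half_card_gt0 : (0 < e)%N.
Proof. by have := half_card_double; lia. Qed.

Lemma expf_card_pred (x : F) : x != 0 -> x ^+ #|F|.-1 = 1.
Proof.
move=> x_neq0; apply: (mulfI x_neq0).
by rewrite mulr1 -exprS prednK ?expf_card // ltnW.
Qed.

Lemma expf_half_card (x : F) : x != 0 -> (x ^+ e == 1) || (x ^+ e == -1).
Proof. by move=> x_neq0; rewrite -sqrf_eq1 -exprM half_card_double expf_card_pred. Qed.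

(* The quadratic character, by Euler's criterion. *)
Definition qchar (x : F) : algC := if x == 0 then 0 else if x ^+ e == 1 then 1 else -1.

Lemma qchar0 : qchar 0 = 0. Proof. by rewrite /qchar eqxx. Qed.
Lemma qchar1 : qchar 1 = 1. Proof. by rewrite /qchar oner_eq0 expr1n eqxx. Qed.

Lemma qchar_trit x : qchar x \in trits.
Proof. by rewrite /qchar; case: ifP => _; [|case: ifP => _]; rewrite !inE eqxx ?orbT. Qed.

Lemma qcharM x y : qchar (x * y) = qchar x * qchar y.
Proof.
rewrite /qchar mulf_eq0.
have [->|x_neq0] := eqVneq x 0; first by rewrite /= mul0r.
have [->|y_neq0] := eqVneq y 0; first by rewrite orbT mulr0.
rewrite /= exprMn; move: (expf_half_card y_neq0) (expf_half_card x_neq0).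
have [-> _|hx] := eqVneq (x ^+ e) 1; have [-> _|hy] := eqVneq (y ^+ e) 1 => /=.
- by rewrite mulr1 eqxx mulr1.
- by rewrite mul1r (negbTE hy) mul1r.
- by rewrite mulr1 (negbTE hx) mulr1.
- by move=> /eqP-> /eqP->; rewrite mulrNN mulr1 eqxx mulrNN mulr1.
Qed.

Lemma qchar_mul_self x : x != 0 -> qchar x * qchar x = 1.
Proof. by move=> x_neq0; rewrite /qchar (negbTE x_neq0); case: ifP; rewrite ?mulr1 ?mulrNN ?mulr1. Qed.

Lemma qcharV x : qchar x^-1 = qchar x.
Proof.
have [->|x_neq0] := eqVneq x 0; first by rewrite invr0.
by rewrite -[LHS]mul1r -(qchar_mul_self x_neq0) -mulrA -qcharM mulfV ?qchar1 ?mulr1.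
Qed.

Lemma qchar_nonsquare : exists g : F, qchar g = -1.
Proof.
suff [g /andP[g_neq0 g_nonsq]] : exists g : F, (g != 0) && (g ^+ e != 1).
  by exists g; rewrite /qchar (negbTE g_neq0) (negbTE g_nonsq).
apply/existsP; apply: contraT => /existsPn all_sq.
have Xe1_neq0 : 'X^e - 1%:P != 0 :> {poly F}.
  by rewrite -size_poly_gt0 size_XnsubC ?half_card_gt0.
have all_roots : all (root ('X^e - 1%:P)) (enum [pred x : F | x != 0]).
  apply/allP => x; rewrite mem_enum inE => x_neq0.
  by rewrite /root !hornerE subr_eq0; have := all_sq x; rewrite x_neq0 negbK.
have := max_poly_roots Xe1_neq0 all_roots (enum_uniq _).
rewrite size_XnsubC ?half_card_gt0 // -cardE cardC1.
rewrite -half_card_double; have := half_card_gt0; lia.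
Qed.

Lemma sum_qchar : \sum_x qchar x = 0.
Proof.
have [g qchar_g] := qchar_nonsquare.
have g_neq0 : g != 0.
  by apply: contra_eq_neq qchar_g => ->; rewrite qchar0 eq_sym oppr_eq0 oner_eq0.
have sum_opp : \sum_x qchar x = - \sum_x qchar x.
  rewrite {1}(reindex_inj (mulfI g_neq0)) /= -sumrN.
  by apply: eq_bigr => x _; rewrite qcharM qchar_g mulN1r.
have : (\sum_x qchar x) *+ 2 == 0 by rewrite mulr2n {1}sum_opp addNr.
by rewrite mulrn_eq0 => /eqP.
Qed.

Lemma sum_qchar_sub x : \sum_z qchar (x - z) = 0.
Proof.
rewrite (reindex_inj (subrI x)) /= -[RHS]sum_qchar.
by apply: eq_bigr => z _; rewrite opprB addrC subrK.
Qed.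

Lemma sumr_indicator_eq (x : F) : \sum_y ((y == x)%:R : algC) = 1.
Proof. by rewrite (bigD1 x) //= eqxx big1 ?addr0 // => y /negbTE->. Qed.

Lemma sum_qchar_mul_self_sub x : \sum_z qchar (x - z) * qchar (x - z) = #|F|%:R - 1.
Proof.
transitivity (\sum_z (1 - (z == x)%:R : algC)); last first.
  by rewrite sumrB sumr_const sumr_indicator_eq.
apply: eq_bigr => z _; have [->|z_neq_x] := eqVneq z x.
  by rewrite subrr qchar0 mul0r subrr.
by rewrite qchar_mul_self ?subr0 // subr_eq0 eq_sym.
Qed.

Lemma sum_qchar_sub_mul a b : a != b -> \sum_x qchar (x - a) * qchar (x - b) = -1.
Proof.
move=> a_neq_b; have c_neq0 : a - b != 0 by rewrite subr_eq0.
rewrite (reindex_inj (addIr a)) /=.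
under eq_bigr do rewrite addrK -addrA.
move: (a - b) c_neq0 => c c_neq0.
have qchar_shift y : qchar y * qchar (y + c) = qchar (1 + c * y^-1) - (y == 0)%:R.
  have [->|y_neq0] := eqVneq y 0; first by rewrite invr0 mulr0 addr0 qchar0 mul0r qchar1 subrr.
  by rewrite /= mulr0n subr0 -[1](mulfV y_neq0) -mulrDl qcharM qcharV mulrC.
have shift_inj : injective (fun y : F => 1 + c * y^-1).
  by move=> y z /addrI /(mulfI c_neq0) /invr_inj.
under eq_bigr do rewrite qchar_shift.
rewrite sumrB.
have -> : \sum_y qchar (1 + c / y) = \sum_y qchar y by rewrite [RHS](reindex_inj shift_inj).
by rewrite sumr_indicator_eq sum_qchar sub0r.
Qed.

End QuadraticCharacter.

Lemma sumr_option (T : finType) (V : nmodType) (f : option T -> V) :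
  \sum_u f u = f None + \sum_x f (Some x).
Proof.
rewrite (bigD1 None) //=; congr (_ + _).
rewrite (reindex_omap Some id) /=; last by case.
by apply: eq_bigl => x; rewrite eqxx.
Qed.

Definition symmetric_conference n (C : 'M[algC]_n) : Prop :=
  [/\ C^T = C, C *m C = (n.-1)%:R%:M, (forall i, C i i = 0) & forall i j, C i j \in trits].

Section PaleyConference.

Variable F : finFieldType.
Hypothesis F_mod4 : #|F| = 1 %[mod 4].

Lemma odd_card_mod4 : odd #|F|.
Proof. by rewrite (divn_eq #|F| 4) F_mod4 oddD oddM andbF. Qed.

Lemma qcharN1 : qchar (-1 : F) = 1.
Proof.
have card_eq : #|F| = (#|F| %/ 4 * 4 + 1)%N by rewrite {1}(divn_eq #|F| 4) F_mod4.
have half_eq : #|F|./2 = (2 * (#|F| %/ 4))%N.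
  by have := half_card_double odd_card_mod4; lia.
by rewrite /qchar oppr_eq0 oner_eq0 -signr_odd half_eq oddM expr0 eqxx.
Qed.

Lemma qchar_subC (x y : F) : qchar (x - y) = qchar (y - x).
Proof. by rewrite -opprB -mulN1r (qcharM odd_card_mod4) [qchar _]qcharN1 mul1r. Qed.

(* Rows and columns are indexed by the projective line over F, None being the
   point at infinity. *)
Definition paley_entry (u v : option F) : algC :=
  match u, v with
  | Some x, Some y => qchar (x - y)
  | None, None => 0
  | _, _ => 1
  end.

Lemma paley_entryC u v : paley_entry u v = paley_entry v u.
Proof. by case: u => [x|]; case: v => [y|] //=; rewrite qchar_subC. Qed.

Lemma paley_entry_diag u : paley_entry u u = 0.
Proof. by case: u => [x|] //=; rewrite subrr qchar0. Qed.

Lemma paley_entry_trit u v : paley_entry u v \in trits.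
Proof.
by case: u => [x|]; case: v => [y|]; rewrite /= ?qchar_trit ?inE ?eqxx ?orbT.
Qed.

Lemma sum_paley_entry_mul u v :
  \sum_w paley_entry u w * paley_entry w v = #|F|%:R * (u == v)%:R.
Proof.
have F_odd := odd_card_mod4.
rewrite sumr_option; case: u => [x|]; case: v => [y|] /=.
- rewrite mul1r; have [<-|x_neq_y] := eqVneq x y.
    under eq_bigr => z _ do rewrite [qchar (z - x)]qchar_subC.
    by rewrite sum_qchar_mul_self_sub // addrC subrK eqxx mulr1.
  under eq_bigr => z _ do rewrite [qchar (x - z)]qchar_subC.
  by rewrite sum_qchar_sub_mul // subrr -[Some x == _]/(x == y) (negbTE x_neq_y) mulr0.
- under eq_bigr => z _ do rewrite mulr1.
  by rewrite mulr0 add0r sum_qchar_sub // mulr0.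
- under eq_bigr => z _ do rewrite mul1r [qchar (z - y)]qchar_subC.
  by rewrite mul0r add0r sum_qchar_sub // mulr0.
- by rewrite mul0r add0r mulr1 sumr_const mulr1.
Qed.

Definition paley_conference_mx : 'M[algC]_#|{: option F}| :=
  \matrix_(i, j) paley_entry (enum_val i) (enum_val j).

Lemma paley_conference_mx_symmetric : symmetric_conference paley_conference_mx.
Proof.
split.
- by apply/matrixP => i j; rewrite !mxE paley_entryC.
- apply/matrixP => i j; rewrite !mxE [in _.-1]card_option /=.
  under eq_bigr do rewrite !mxE.
  rewrite -(big_enum_val (fun w => paley_entry (enum_val i) w * paley_entry w (enum_val j))) /=.
  rewrite (eq_bigl xpredT) ?sum_paley_entry_mul; last by move=> w; rewrite inE.
  by rewrite (inj_eq enum_val_inj); case: (i == j); rewrite ?mulr1 ?mulr0.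
- by move=> i; rewrite mxE paley_entry_diag.
- by move=> i j; rewrite mxE paley_entry_trit.
Qed.

End PaleyConference.

Definition paley_block : 'M[algC]_2 := \matrix_(i, j) (-1) ^+ (j < i)%N.

Lemma paley_block_mul_tr : paley_block *m paley_block^T = 2%:M.
Proof.
apply/matrixP => -[[|[|//]] ?] -[[|[|//]] ?]; rewrite !mxE !big_ord_recl !big_ord0 !mxE /=.
all: by rewrite ?expr0 ?expr1 ?mulr1n ?mulr0n; ring.
Qed.

Lemma paley_block_tr_mul : paley_block^T *m paley_block = 2%:M.
Proof.
apply/matrixP => -[[|[|//]] ?] -[[|[|//]] ?]; rewrite !mxE !big_ord_recl !big_ord0 !mxE /=.
all: by rewrite ?expr0 ?expr1 ?mulr1n ?mulr0n; ring.
Qed.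

Lemma paley_block_sqr_add : paley_block *m paley_block + paley_block^T *m paley_block^T = 0.
Proof.
apply/matrixP => -[[|[|//]] ?] -[[|[|//]] ?]; rewrite !mxE !big_ord_recl !big_ord0 !mxE /=.
all: by rewrite ?expr0 ?expr1 ?mulr1n ?mulr0n; ring.
Qed.

Definition paley_mx n (C : 'M[algC]_n) : 'M[algC]_(n * 2) :=
  C *t paley_block + 1%:M *t paley_block^T.

Lemma paley_mx_hadamard n (C : 'M[algC]_n) : (0 < n)%N ->
  symmetric_conference C -> weighing_matrix (n * 2) (n * 2) (paley_mx C).
Proof.
move=> n_gt0 [C_sym C_sqr C_diag C_trit]; split=> [I J|].
  case: (mxtens_indexP I) => u e; case: (mxtens_indexP J) => v f.
  rewrite !mxE !mxtens_indexK /=; have [<-|u_neq_v] := eqVneq u v.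
    by rewrite C_diag mul0r add0r mul1r trits_sign.
  by rewrite mul0r addr0 tritsM ?trits_sign.
rewrite /paley_mx linearD /= !trmx_tens trmx1 trmxK C_sym.
rewrite !mulmxDl !mulmxDr !tensmx_mul !mulmx1 !mul1mx.
rewrite addrA -(addrA (_ *t _)) -tensmxDr paley_block_sqr_add tensmx0 addr0.
rewrite C_sqr paley_block_mul_tr paley_block_tr_mul !tensmx_scalar -raddfD /=.
by rewrite mul1r -natrM -natrD addnC -mulSn prednK.
Qed.

Lemma paley_hadamard (F : finFieldType) : #|F| = 1 %[mod 4] ->
  exists H : 'M[algC]_(#|F|.+1 * 2), weighing_matrix (#|F|.+1 * 2) (#|F|.+1 * 2) H.
Proof.
move=> F_mod4; rewrite -card_option; exists (paley_mx (paley_conference_mx F)).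
apply: paley_mx_hadamard; first by rewrite card_option.
exact: paley_conference_mx_symmetric.
Qed.

Lemma hadamard4_exists : exists h : 'M[algC]_4, weighing_matrix 4 4 h.
Proof.
have block_hadamard : weighing_matrix 2 2 paley_block.
  by split=> [i j|]; [rewrite mxE trits_sign | exact: paley_block_mul_tr].
exists (paley_block *t paley_block).
exact: (weighing_matrix_tensmx block_hadamard block_hadamard).
Qed.

Local Close Scope ring_scope.

Theorem corollary4p12 (p : nat) :
  prime_power p -> p = 1 %[mod 4] ->
  let q := (p.+1)./2 in
  exists W : 'I_4 -> 'M[algC]_(16 * q),
    mutually_quasi_unbiased 4 (16 * q) (16 * q) 16 (16 * q ^ 2) W.
Proof.
move=> [r [e [r_prime [e_gt0 p_eq]]]] p_mod4 q.
have [F _ card_F] := pPrimePowerField r_prime e_gt0.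
have [F4 _ card_F4] := pPrimePowerField (isT : prime 2) (isT : 0 < 2).
have q_eq : p.+1 = q * 2 by rewrite /q; lia.
have [h h_hadamard] : exists h : 'M[algC]_#|F4|, weighing_matrix #|F4| #|F4| h.
  by rewrite card_F4; exact: hadamard4_exists.
have [H H_hadamard] :
    exists H : 'M[algC]_(#|F4| * q), weighing_matrix (#|F4| * q) (#|F4| * q) H.
  rewrite (_ : #|F4| * q = #|F|.+1 * 2); last by rewrite card_F4 card_F -p_eq q_eq; lia.
  by apply: paley_hadamard; rewrite card_F -p_eq.
have := finField_mutually_quasi_unbiased _ h_hadamard H_hadamard.
by rewrite card_F4 mulnA mulnACA; apply; lia.
Qed.
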